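(* For any $n\times n$ completely positive semidefinite matrix $X$, $$\mathrm{cpsd}\text{-}\mathrm{rank}(X)\ge \frac{\left(\sum_{i=1}^n\sqrt{X_{ii}}\right)^2}{\sum_{i,j=1}^n X_{ij}}.$$
   Context: An $n\times n$ matrix $X$ is completely positive semidefinite (cpsd) if there exist $d\ge1$ and Hermitian positive semidefinite $d\times d$ matrices $P_1,\dots,P_n$ with $X_{ij}=\mathrm{Tr}(P_iP_j)$ for all $i,j$; the cpsd-rank of $X$ is the least such $d$. *)

From HB Require Import structures.
From mathcomp Require Import all_boot all_order all_algebra.
From mathcomp Require Import complex.
From mathcomp Require Import boolp reals.

Set Implicit Arguments.
Unset Strict Implicit.
Unset Printing Implicit Defensive.

Import Order.TTheory GRing.Theory Num.Theory.
Local Open Scope ring_scope.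

Definition adjmx (R : realType) (m n : nat) (A : 'M[R[i]]_(m, n)) : 'M[R[i]]_(n, m) :=
  map_mx Num.conj (A^T).

Definition hermitian_psd (R : realType) (d : nat) (P : 'M[R[i]]_d) : Prop :=
  adjmx P = P /\ forall v : 'cV[R[i]]_d, 0 <= (adjmx v *m P *m v) 0 0.

Definition cpsd_factorization (R : realType) (n : nat) (X : 'M[R]_n) (d : nat) : Prop :=
  exists P : 'I_n -> 'M[R[i]]_d,
    (forall i, hermitian_psd (P i)) /\
    (forall i j, ((X i j)%:C)%C = \tr (P i *m P j)).

Definition is_cpsd (R : realType) (n : nat) (X : 'M[R]_n) : Prop :=
  exists d, (1 <= d)%N /\ cpsd_factorization X d.

Definition cpsd_rank (R : realType) (n : nat) (X : 'M[R]_n) (hX : is_cpsd X) : nat :=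
  ex_minn (P := fun d => `[< (1 <= d)%N /\ cpsd_factorization X d >])
    (let: ex_intro d hd := hX in ex_intro _ d (asboolT hd)).

From HB Require Import structures.
From mathcomp Require Import all_boot all_order all_algebra.
From mathcomp Require Import complex.
From mathcomp Require Import boolp reals.
From mathcomp Require Import ring lra.
Import Order.TTheory GRing.Theory Num.Theory.
Set Implicit Arguments.
Unset Strict Implicit.
Local Open Scope ring_scope.

(* Let X_ij = Tr(P_i P_j) with P_i Hermitian PSD of size d, and S = sum_i P_i.
   The 2x2 principal minors of a PSD matrix give |P_kl|^2 <= P_kk P_ll, hence
   X_ii = Tr(P_i^2) = sum_kl |P_i,kl|^2 <= (Tr P_i)^2 and sqrt X_ii <= Tr P_i.
   On the other hand sum_ij X_ij = Tr(S^2) = sum_kl |S_kl|^2 >= sum_k S_kk^2,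
   which is at least (Tr S)^2 / d by Cauchy-Schwarz, and Tr S = sum_i Tr P_i. *)

Local Notation "x %:C" := (x%:C)%C : ring_scope.

Lemma real_sqr_sum_le (C : numDomainType) (d : nat) (x : 'I_d -> C) :
  (forall k, x k \is Num.real) -> (\sum_k x k) ^+ 2 <= d%:R * \sum_k x k ^+ 2.
Proof.
move=> xR.
have sum_sqr_diff : \sum_k \sum_l (x k - x l) ^+ 2
    = (d%:R * \sum_k x k ^+ 2 - (\sum_k x k) ^+ 2) *+ 2.
  under eq_bigr => k _ do under eq_bigr => l _ do rewrite sqrrB addrAC.
  under eq_bigr => k _ do rewrite sumrB big_split /= sumr_const card_ord sumrMnl -mulr_sumr.
  rewrite sumrB big_split /= sumr_const card_ord !sumrMnl -mulr_suml -expr2.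
  by rewrite mulrnBl mulr2n mulr_natl.
have : 0 <= \sum_k \sum_l (x k - x l) ^+ 2.
  by do 2!(apply: sumr_ge0 => ? _); rewrite -realEsqr rpredB.
by rewrite sum_sqr_diff pmulrn_lge0 // subr_ge0.
Qed.

Lemma le_mul_of_quadratic_ge0 (F : realFieldType) (a c n : F) :
  0 <= a -> 0 <= c -> 0 <= n ->
  (forall s, 0 <= a * n - 2 * s * n + s ^+ 2 * c) -> n <= a * c.
Proof.
move=> a0 c0 n0 q_ge0; have [c_eq0|c_neq0] := eqVneq c 0.
  by have := q_ge0 (a + 1); rewrite c_eq0 mulr0 addr0 => q1; nra.
have c_gt0 : 0 < c by rewrite lt_def c_neq0.
have := q_ge0 (n / c); set s := n / c.
have sc : s * c = n by rewrite /s divfK.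
rewrite expr2 -(mulrA s) sc => q_s.
have : 0 <= n * (a * c - n) by nra.
have [-> _|n_neq0] := eqVneq n 0; first exact: mulr_ge0.
have n_gt0 : 0 < n by rewrite lt_def n_neq0.
by rewrite pmulr_rge0 // subr_ge0.
Qed.

Section HermitianMatrices.
Variables (R : realType) (d : nat).
Implicit Types (P S : 'M[R[i]]_d) (u w : 'cV[R[i]]_d).
Local Notation unit_cV k := (delta_mx k 0 : 'cV[R[i]]_d).

Lemma adjmxE m n (A : 'M[R[i]]_(m, n)) i j : adjmx A i j = (A j i)^*.
Proof. by rewrite !mxE. Qed.

Lemma adjmxD m n (A B : 'M[R[i]]_(m, n)) : adjmx (A + B) = adjmx A + adjmx B.
Proof. by apply/matrixP => i j; rewrite !mxE rmorphD. Qed.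

Lemma adjmxZ m n (a : R[i]) (A : 'M[R[i]]_(m, n)) : adjmx (a *: A) = a^* *: adjmx A.
Proof. by apply/matrixP => i j; rewrite !mxE rmorphM. Qed.

Lemma adjmx_delta m n (i : 'I_m) (j : 'I_n) :
  adjmx (delta_mx i j : 'M[R[i]]_(m, n)) = delta_mx j i.
Proof. by apply/matrixP => k l; rewrite !mxE conjC_nat andbC. Qed.

Lemma form_delta P k l : (adjmx (unit_cV k) *m P *m unit_cV l) 0 0 = P k l.
Proof. by rewrite adjmx_delta -rowE -colE !mxE. Qed.

Lemma form_comb P (a b : R[i]) u w :
  let v := a *: u + b *: w in
  (adjmx v *m P *m v) 0 0 =
    a^* * a * (adjmx u *m P *m u) 0 0 + a^* * b * (adjmx u *m P *m w) 0 0
  + b^* * a * (adjmx w *m P *m u) 0 0 + b^* * b * (adjmx w *m P *m w) 0 0.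
Proof.
rewrite /= adjmxD !adjmxZ !mulmxDl !mulmxDr -!scalemxAl -!scalemxAr !scalerA.
move: (adjmx u *m P *m u) (adjmx u *m P *m w) (adjmx w *m P *m u) (adjmx w *m P *m w).
by move=> A B C D; rewrite !mxE addrA.
Qed.

Lemma hermitian_entryC S k l : adjmx S = S -> S l k = (S k l)^*.
Proof. by move=> hS; rewrite -[in LHS]hS adjmxE. Qed.

Lemma psd_diag_ge0 P k : hermitian_psd P -> 0 <= P k k.
Proof. by case=> _ /(_ (unit_cV k)); rewrite form_delta. Qed.

Lemma psd_sqr_normC_le P k l : hermitian_psd P -> `|P k l| ^+ 2 <= P k k * P l l.
Proof.
move=> hP; have [hS form_ge0] := hP; set z := P k l.
have /complex_realP[a Pkk] : P k k \is Num.real by rewrite ger0_real ?psd_diag_ge0.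
have /complex_realP[c Pll] : P l l \is Num.real by rewrite ger0_real ?psd_diag_ge0.
have a0 : 0 <= a by rewrite -ler0c -Pkk psd_diag_ge0.
have c0 : 0 <= c by rewrite -ler0c -Pll psd_diag_ge0.
set n := complex.Re z ^+ 2 + complex.Im z ^+ 2.
have n0 : 0 <= n by rewrite addr_ge0 ?sqr_ge0.
have zz : z^* * z = n%:C by rewrite -normCKC -add_Re2_Im2.
rewrite -add_Re2_Im2 -/n Pkk Pll -rmorphM lecR.
(* The test vector -z e_k + s e_l turns positivity into a real quadratic in s. *)
apply: le_mul_of_quadratic_ge0 => // s.
have sR : s%:C \is Num.real by apply/complex_realP; exists s.
have := form_ge0 ((- z) *: unit_cV k + s%:C *: unit_cV l).
rewrite form_comb !form_delta (hermitian_entryC k l hS) -/z Pkk Pll rmorphN conj_Creal //=.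
suff -> : - z^* * - z * a%:C + - z^* * s%:C * z + s%:C * - z * z^* + s%:C * s%:C * c%:C
    = (a * n - 2 * s * n + s ^+ 2 * c)%:C by rewrite ler0c.
transitivity (a%:C * (z^* * z) - 2 * s%:C * (z^* * z) + s%:C ^+ 2 * c%:C); first ring.
by rewrite zz; ring.
Qed.

Lemma hermitian_tr_sqr S : adjmx S = S ->
  \tr (S *m S) = \sum_k \sum_l `|S k l| ^+ 2.
Proof.
move=> hS; apply: eq_bigr => k _; rewrite mxE; apply: eq_bigr => l _.
by rewrite (hermitian_entryC k l hS) normCK.
Qed.

Lemma hermitian_tr_sqr_ge0 S : adjmx S = S -> 0 <= \tr (S *m S).
Proof.
by move=> hS; rewrite hermitian_tr_sqr //; do 2!(apply: sumr_ge0 => ? _); rewrite exprn_ge0.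
Qed.

Lemma psd_tr_ge0 P : hermitian_psd P -> 0 <= \tr P.
Proof. by move=> hP; apply: sumr_ge0 => k _; apply: psd_diag_ge0. Qed.

Lemma psd_tr_sqr_le P : hermitian_psd P -> \tr (P *m P) <= \tr P ^+ 2.
Proof.
move=> hP; rewrite hermitian_tr_sqr ?hP.1 // expr2 mulr_suml.
apply: ler_sum => k _; rewrite mulr_sumr; apply: ler_sum => l _.
exact: psd_sqr_normC_le.
Qed.

Lemma hermitian_tr_sqr_ge S : adjmx S = S -> \tr S ^+ 2 <= d%:R * \tr (S *m S).
Proof.
move=> hS; have diag_real k : S k k \is Num.real.
  by apply/CrealP; rewrite -hermitian_entryC.
apply: le_trans (real_sqr_sum_le diag_real) _; apply: ler_wpM2l => //.
rewrite hermitian_tr_sqr //; apply: ler_sum => k _.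
rewrite -real_normK // (bigD1 k) //= lerDl.
by apply: sumr_ge0 => l _; rewrite exprn_ge0.
Qed.

Lemma adjmx_sum m n I (r : seq I) (Q : pred I) (A : I -> 'M[R[i]]_(m, n)) :
  adjmx (\sum_(i <- r | Q i) A i) = \sum_(i <- r | Q i) adjmx (A i).
Proof.
apply: (big_morph _ (@adjmxD m n)).
by apply/matrixP => i j; rewrite !mxE conjC0.
Qed.

End HermitianMatrices.

Local Notation mxtrace_sum := (raddf_sum (@mxtrace _ _)).

Lemma cpsd_factorization_sqr_le (R : realType) n (X : 'M[R]_n) d :
  cpsd_factorization X d ->
  (\sum_i Num.sqrt (X i i)) ^+ 2 <= d%:R * \sum_i \sum_j X i j.
Proof.
case=> P [hP hX]; pose S := \sum_i P i.
have hS : adjmx S = S by rewrite adjmx_sum; apply: eq_bigr => i _; exact: (hP i).1.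
have sum_X : (\sum_i \sum_j X i j)%:C = \tr (S *m S).
  rewrite rmorph_sum mulmx_suml mxtrace_sum; apply: eq_bigr => i _.
  by rewrite rmorph_sum mulmx_sumr mxtrace_sum; apply: eq_bigr => j _; exact: hX.
have sqrt_le i : (Num.sqrt (X i i))%:C <= \tr (P i).
  have Xii0 : 0 <= X i i by have := hermitian_tr_sqr_ge0 (hP i).1; rewrite -hX ler0c.
  rewrite -ler_sqr ?nnegrE ?ler0c ?sqrtr_ge0 ?psd_tr_ge0 //.
  apply: le_trans (psd_tr_sqr_le (hP i)).
  by rewrite -hX -rmorphXn sqr_sqrtr.
rewrite -lecR; apply: (@le_trans _ _ (\tr S ^+ 2)).
  rewrite rmorphXn rmorph_sum mxtrace_sum ler_sqr ?nnegrE.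
  - by apply: ler_sum => i _; exact: sqrt_le.
  - by apply: sumr_ge0 => i _; rewrite ler0c sqrtr_ge0.
  - by apply: sumr_ge0 => i _; apply: psd_tr_ge0.
apply: le_trans (hermitian_tr_sqr_ge hS) _.
by rewrite -sum_X rmorphM rmorph_nat.
Qed.

Lemma ler_div_of_ler_mul (F : realFieldType) (a b c : F) :
  0 <= a -> 0 <= c -> a <= c * b -> a / b <= c.
Proof.
(* For b <= 0, including b = 0 where a / 0 = 0, the quotient is nonpositive. *)
move=> a0 c0 le_a_cb; have [b_gt0|b_le0] := ltP 0 b; first by rewrite ler_pdivrMr.
by apply: le_trans c0; rewrite mulr_ge0_le0 // invr_le0.
Qed.

Theorem theorem3p8 (R : realType) (n : nat) (X : 'M[R]_n) (hX : is_cpsd X) :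
  (\sum_(i < n) Num.sqrt (X i i)) ^+ 2 / (\sum_(i < n) \sum_(j < n) X i j)
    <= (cpsd_rank hX)%:R.
Proof.
rewrite /cpsd_rank; case: ex_minnP => d /asboolP[_ hd] _.
exact: ler_div_of_ler_mul (sqr_ge0 _) (ler0n _ _) (cpsd_factorization_sqr_le hd).
Qed.
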